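(* In the matching game defined by a market $\mathbf{M}=(\mathbf{P},\mathbf{A},\mathbf{O})$, for every pure-strategy Nash equilibrium $a$ the match $\mu(a)$ is stable, and every stable match equals $\mu(a)$ for some pure-strategy Nash equilibrium $a$. Moreover, any action profile $a$ with $\mu(a)=\mu^*$ (the proposer-optimal stable match) is a pure Nash equilibrium that maximizes the welfare $\sum_{i=1}^n u_i(a)$ among all pure Nash equilibria.
   Context: Market: proposers $\mathbf{P}=\{P_1,\dots,P_n\}$ and disjoint acceptors $\mathbf{A}=\{A_1,\dots,A_m\}$. Each proposer $P_i$ has an injective function $O_{P_i}:\mathbf{A}\cup\{\emptyset\}\to[0,1]$ with $O_{P_i}(A_j)>O_{P_i}(\emptyset)=0$; each acceptor $A_j$ has an injective $O_{A_j}:\mathbf{P}\cup\{\emptyset\}\to[0,1]$ with $O_{A_j}(P_i)>O_{A_j}(\emptyset)=0$. Game: the players are the proposers; each $P_i$ chooses $a_i\in\mathbf{A}\cup\{\emptyset\}$. Each acceptor $A_j$ accepts its $O_{A_j}$-most preferred proposer among $\{P_i:a_i=A_j\}$ (if nonempty), rejecting the others, giving a match $\mu(a)$ with $\mu_{P_i}(a)$ the acceptor that accepted $P_i$ (or $\emptyset$) and $\mu_{A_j}(a)$ the proposer accepted by $A_j$ (or $\emptyset$). Utility $u_i(a)=O_{P_i}(\mu_{P_i}(a))$. A match $\mu$ is unstable if some pair $(P_i,A_j)$ has $O_{P_i}(A_j)>O_{P_i}(\mu_{P_i})$ and $O_{A_j}(P_i)>O_{A_j}(\mu_{A_j})$,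 and stable otherwise. The proposer-optimal stable match $\mu^*$ is the stable match such that $O_{P_i}(\mu^*_{P_i})\ge O_{P_i}(\mu'_{P_i})$ for every stable $\mu'$ and every $i$. *)

From HB Require Import structures.
From mathcomp Require Import all_boot all_order all_algebra.
From mathcomp Require Import reals.
Set Implicit Arguments. Unset Strict Implicit. Unset Printing Implicit Defensive.
Import Order.TTheory GRing.Theory Num.Theory.
Local Open Scope ring_scope.

(* Proposers are 'I_n, acceptors are 'I_m; [None] stands for the empty choice ∅. *)

Section Market.
Variables (R : realType) (n m : nat).
Variables (OP : 'I_n -> option 'I_m -> R) (OA : 'I_m -> option 'I_n -> R).

Definition market_ok : Prop :=
  (forall i, injective (OP i)) /\ (forall i, OP i None = 0) /\
  (forall i j, 0 < OP i (Some j)) /\ (forall i x, 0 <= OP i x <= 1) /\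
  (forall j, injective (OA j)) /\ (forall j, OA j None = 0) /\
  (forall j i, 0 < OA j (Some i)) /\ (forall j x, 0 <= OA j x <= 1).

Definition profile := 'I_n -> option 'I_m.

Definition accepted (a : profile) (j : 'I_m) : option 'I_n :=
  [pick i | (a i == Some j) &&
     [forall k, (a k == Some j) ==> (OA j (Some k) <= OA j (Some i))]].

Definition muP (a : profile) (i : 'I_n) : option 'I_m :=
  if a i is Some j then (if accepted a j == Some i then Some j else None) else None.

Definition util (a : profile) (i : 'I_n) : R := OP i (muP a i).

Definition deviate (a : profile) (i : 'I_n) (b : option 'I_m) : profile :=
  fun k => if k == i then b else a k.

Definition nash (a : profile) : Prop :=
  forall i b, util (deviate a i b) i <= util a i.

Definition welfare (a : profile) : R := \sum_(i < n) util a i.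

(* A match, given by its proposer side mu i = μ_{P_i} (each acceptor matched to
   at most one proposer); the acceptor side is derived. *)
Definition is_match (mu : 'I_n -> option 'I_m) : Prop :=
  forall i i' j, mu i = Some j -> mu i' = Some j -> i = i'.

Definition muA (mu : 'I_n -> option 'I_m) (j : 'I_m) : option 'I_n :=
  [pick i | mu i == Some j].

Definition stable (mu : 'I_n -> option 'I_m) : Prop :=
  is_match mu /\
  ~ (exists i j, OP i (mu i) < OP i (Some j) /\ OA j (muA mu j) < OA j (Some i)).

Definition proposer_optimal (mu : 'I_n -> option 'I_m) : Prop :=
  stable mu /\ forall mu', stable mu' -> forall i, OP i (mu' i) <= OP i (mu i).

End Market.

From mathcomp Require Import all_boot all_order all_algebra.
From mathcomp Require Import reals.
From Stdlib Require Import FunctionalExtensionality.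
Set Implicit Arguments. Unset Strict Implicit. Unset Printing Implicit Defensive.
Import Order.TTheory GRing.Theory Num.Theory.
Local Open Scope ring_scope.

(* A proposer i deviating to acceptor j is accepted exactly when i beats every
   other proposer to j, in particular j's current partner in mu(a).  Hence a
   profitable deviation of i to j is the same thing as a blocking pair (i, j)
   of mu(a): Nash equilibria are the profiles with stable outcome.  A stable
   match mu, used as a profile, has outcome mu itself, and since every stable
   match is dominated by the proposer-optimal one for each proposer, a profile
   realizing it maximizes welfare among equilibria. *)

Section MatchingGame.
Variables (R : realType) (n m : nat).
Variables (OP : 'I_n -> option 'I_m -> R) (OA : 'I_m -> option 'I_n -> R).
Hypothesis OA_inj : forall j, injective (OA j).

Implicit Types (a : profile n m) (mu : 'I_n -> option 'I_m).

Lemma accepted_spec a j i :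
  accepted OA a j = Some i ->
  a i = Some j /\ forall k, a k = Some j -> OA j (Some k) <= OA j (Some i).
Proof.
rewrite /accepted; case: pickP => [x /andP[/eqP axj /forallP xmax] [<-]|//].
by split=> // k akj; move: (xmax k); rewrite akj eqxx.
Qed.

Lemma accepted_of_max a j i :
  a i = Some j -> (forall k, a k = Some j -> OA j (Some k) <= OA j (Some i)) ->
  accepted OA a j = Some i.
Proof.
move=> aij imax; rewrite /accepted.
case: pickP => [x /andP[/eqP axj /forallP xmax] | none].
  apply: (@OA_inj j (Some x) (Some i)); apply/eqP; rewrite eq_le (imax x axj) /=.
  by move: (xmax i); rewrite aij eqxx.
case/negP: (none i); rewrite aij eqxx /=.
by apply/forallP => k; apply/implyP => /eqP; apply: imax.
Qed.

Lemma accepted_exists a j k : a k = Some j -> exists i, accepted OA a j = Some i.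
Proof.
move=> akj; have akj' : k \in [pred i | a i == Some j] by apply/eqP.
case: (arg_maxP (fun i => OA j (Some i)) akj') => i /eqP aij imax.
by exists i; apply: accepted_of_max => // k' /eqP; apply: imax.
Qed.

Lemma muP_some a k j : muP OA a k = Some j -> a k = Some j /\ accepted OA a j = Some k.
Proof. by rewrite /muP; case: (a k) => [j'|//]; case: eqP => // acc [<-]. Qed.

Lemma muP_is_match a : is_match (muP OA a).
Proof.
move=> i i' j /muP_some[_ acc] /muP_some[_ acc'].
by move: acc; rewrite acc' => -[].
Qed.

Lemma muA_some mu j k : muA mu j = Some k -> mu k = Some j.
Proof. by rewrite /muA; case: pickP => [x /eqP mux [<-]|]. Qed.

Lemma muA_matched mu j k : is_match mu -> mu k = Some j -> muA mu j = Some k.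
Proof.
move=> mu_match mukj; rewrite /muA; case: pickP => [x /eqP muxj | none].
  by rewrite (mu_match _ _ _ muxj mukj).
by move: (none k); rewrite mukj eqxx.
Qed.

Lemma muA_muP_ge a j k : a k = Some j -> OA j (Some k) <= OA j (muA (muP OA a) j).
Proof.
move=> akj; have [i acc] := accepted_exists akj.
have [aij imax] := accepted_spec acc.
have muPi : muP OA a i = Some j by rewrite /muP aij acc eqxx.
by rewrite (muA_matched (muP_is_match (a := a)) muPi); apply: imax.
Qed.

Lemma deviate_self a i b : deviate a i b i = b.
Proof. by rewrite /deviate eqxx. Qed.

Lemma deviate_other a i b k : k != i -> deviate a i b k = a k.
Proof. by rewrite /deviate => /negbTE ->. Qed.

Lemma accepted_deviate a i j :
  accepted OA (deviate a i (Some j)) j = Some i <->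
  forall k, k != i -> a k = Some j -> OA j (Some k) < OA j (Some i).
Proof.
split=> [acc k ki akj | beats].
  have [_ imax] := accepted_spec acc.
  rewrite lt_neqAle imax ?deviate_other // andbT.
  by apply/eqP => /OA_inj [] /eqP; rewrite (negbTE ki).
apply: accepted_of_max; first exact: deviate_self.
move=> k; have [-> //|ki] := eqVneq k i.
by rewrite deviate_other // => /(beats _ ki)/ltW.
Qed.

Lemma muP_deviate a i j :
  muP OA (deviate a i (Some j)) i =
  if accepted OA (deviate a i (Some j)) j == Some i then Some j else None.
Proof. by rewrite /muP deviate_self. Qed.

Lemma nash_stable a : nash OP OA a -> stable OP OA (muP OA a).
Proof.
move=> a_nash; split; first exact: muP_is_match.
case=> i [j [i_prefers j_prefers]].
have acc : accepted OA (deviate a i (Some j)) j = Some i.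
  apply/accepted_deviate => k _ akj.
  exact: le_lt_trans (muA_muP_ge akj) j_prefers.
by move: (a_nash i (Some j)); rewrite /util muP_deviate acc eqxx leNgt i_prefers.
Qed.

Lemma muP_of_match mu : is_match mu -> muP OA mu = mu.
Proof.
move=> mu_match; apply: functional_extensionality => i.
rewrite /muP; case muij: (mu i) => [j|//].
suff -> : accepted OA mu j = Some i by rewrite eqxx.
by apply: accepted_of_max => // k mukj; rewrite (mu_match _ _ _ mukj muij).
Qed.

Hypotheses (OP_None : forall i, OP i None = 0) (OP_ge0 : forall i x, 0 <= OP i x).
Hypotheses (OA_None : forall j, OA j None = 0) (OA_gt0 : forall j i, 0 < OA j (Some i)).

Lemma stable_nash a : stable OP OA (muP OA a) -> nash OP OA a.
Proof.
case=> _ no_blocking i [j|]; rewrite /util; last first.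
  by rewrite /muP deviate_self OP_None.
rewrite muP_deviate; case: eqP => [acc|_]; last by rewrite OP_None.
have beats := proj1 (accepted_deviate a i j) acc.
rewrite leNgt; apply/negP => i_prefers; apply: no_blocking; exists i, j.
split=> //; case partner: (muA (muP OA a) j) => [k|]; last by rewrite OA_None.
have mukj := muA_some partner.
have [ki|ki] := eqVneq k i; first by move: i_prefers; rewrite -ki mukj ltxx.
by apply: beats ki _; have [] := muP_some mukj.
Qed.

End MatchingGame.

Theorem mainTheorem2 (R : realType) (n m : nat)
  (OP : 'I_n -> option 'I_m -> R) (OA : 'I_m -> option 'I_n -> R) :
  market_ok OP OA ->
  (forall a : profile n m, nash OP OA a -> stable OP OA (muP OA a)) /\
  (forall mu : 'I_n -> option 'I_m, stable OP OA mu ->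
     exists a : profile n m, nash OP OA a /\ forall i, muP OA a i = mu i) /\
  (forall mustar : 'I_n -> option 'I_m, proposer_optimal OP OA mustar ->
     forall a : profile n m, (forall i, muP OA a i = mustar i) ->
       nash OP OA a /\
       forall a' : profile n m, nash OP OA a' -> welfare OP OA a' <= welfare OP OA a).
Proof.
move=> [_ [OP_None [_ [OP_bnd [OA_inj [OA_None [OA_gt0 _]]]]]]].
have OP_ge0 i x : 0 <= OP i x by case/andP: (OP_bnd i x).
have nash_of_stable := stable_nash OA_inj OP_None OP_ge0 OA_None OA_gt0.
split; first exact: nash_stable.
split=> [mu mu_stable | mustar [mustar_stable mustar_opt] a a_mustar].
  have muP_mu := muP_of_match OA_inj (proj1 mu_stable).
  by exists mu; split; [apply: nash_of_stable; rewrite muP_mu | rewrite muP_mu].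
have muP_a : muP OA a = mustar by apply: functional_extensionality.
split; first by apply: nash_of_stable; rewrite muP_a.
move=> a' a'_nash; apply: ler_sum => i _; rewrite /util muP_a.
exact: mustar_opt (nash_stable OA_inj a'_nash) i.
Qed.
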